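(* For every bounded set $X\subseteq\mathbb{R}^d$ we have $\mathrm{Flt}_d(X)\le\mathrm{Flt}^{\mathbb{R}}_d(X+[0,1]^d)$, where $X+[0,1]^d$ is the Minkowski sum.
   Context: Convex body: non-empty compact convex subset of $\mathbb{R}^d$; $\mathrm{width}(K)=\min_{u\in(\mathbb{Z}^d)^*\setminus\{0\}}\max_{x,y\in K}|u(x)-u(y)|$. A unimodular (resp. $\mathbb{R}$-unimodular) copy of $Y\subseteq\mathbb{R}^d$ is $\{Ay+b:y\in Y\}$ with $A\in\mathrm{GL}(d,\mathbb{Z})$ and $b\in\mathbb{Z}^d$ (resp. $b\in\mathbb{R}^d$). For bounded $X$: $\mathrm{Flt}_d(X)=\sup\{\mathrm{width}(K): K\text{ convex body not containing a unimodular copy of }X\}$ and $\mathrm{Flt}^{\mathbb{R}}_d(X)=\sup\{\mathrm{width}(K): K\text{ convex body not containing an }\mathbb{R}\text{-unimodular copy of }X\}$ (values in $[0,\infty]$). *)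

From Stdlib Require Import Reals ZArith.
From Stdlib Require Vectors.Fin.
Open Scope R_scope.

Definition vec (d : nat) := Fin.t d -> R.
Definition ivec (d : nat) := Fin.t d -> Z.
Definition imat (d : nat) := Fin.t d -> Fin.t d -> Z.

Fixpoint fsum (d : nat) : (Fin.t d -> R) -> R :=
  match d return (Fin.t d -> R) -> R with
  | O => fun _ => 0
  | S n => fun f => f Fin.F1 + fsum n (fun i => f (Fin.FS i))
  end.

Definition dual_eval {d : nat} (u : ivec d) (x : vec d) : R :=
  fsum d (fun i => IZR (u i) * x i).

Definition convex_set {d : nat} (K : vec d -> Prop) : Prop :=
  forall x y t, K x -> K y -> 0 <= t <= 1 ->
    K (fun i => t * x i + (1 - t) * y i).

Definition bounded_set {d : nat} (K : vec d -> Prop) : Prop :=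
  exists M, forall x, K x -> forall i, Rabs (x i) <= M.

Definition closed_set {d : nat} (K : vec d -> Prop) : Prop :=
  forall (xs : nat -> vec d) (x : vec d),
    (forall n, K (xs n)) -> (forall i, Un_cv (fun n => xs n i) (x i)) -> K x.

(* compact_set in R^d = closed_set and bounded_set (Heine-Borel) *)
Definition compact_set {d : nat} (K : vec d -> Prop) : Prop := closed_set K /\ bounded_set K.

Definition convex_body {d : nat} (K : vec d -> Prop) : Prop :=
  (exists x, K x) /\ compact_set K /\ convex_set K.

Definition width_along {d : nat} (K : vec d -> Prop) (u : ivec d) (m : R) : Prop :=
  is_lub (fun r => exists x y, K x /\ K y /\ r = Rabs (dual_eval u x - dual_eval u y)) m.

Definition nonzero {d : nat} (u : ivec d) : Prop := exists i, u i <> 0%Z.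

Definition lattice_width {d : nat} (K : vec d -> Prop) (w : R) : Prop :=
  (exists u, nonzero u /\ width_along K u w) /\
  (forall u m, nonzero u -> width_along K u m -> w <= m).

Definition idx_eq {d : nat} (i j : Fin.t d) : R :=
  if Fin.eq_dec i j then 1 else 0.

Definition GLZ {d : nat} (A : imat d) : Prop :=
  exists B : imat d,
    (forall i k, fsum d (fun j => IZR (A i j) * IZR (B j k)) = idx_eq i k) /\
    (forall i k, fsum d (fun j => IZR (B i j) * IZR (A j k)) = idx_eq i k).

Definition affine_image {d : nat} (A : imat d) (b : vec d) (y : vec d) : vec d :=
  fun i => fsum d (fun j => IZR (A i j) * y j) + b i.

Definition contains_unimodular_copy {d : nat} (K Y : vec d -> Prop) : Prop :=
  exists (A : imat d) (b : ivec d), GLZ A /\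
    forall y, Y y -> K (affine_image A (fun i => IZR (b i)) y).

Definition contains_R_unimodular_copy {d : nat} (K Y : vec d -> Prop) : Prop :=
  exists (A : imat d) (b : vec d), GLZ A /\
    forall y, Y y -> K (affine_image A b y).

(* ---- flatness constants, as sets of attained widths ---- *)
Definition Flt_widths (d : nat) (X : vec d -> Prop) (w : R) : Prop :=
  exists K, convex_body K /\ ~ contains_unimodular_copy K X /\ lattice_width K w.

Definition FltR_widths (d : nat) (X : vec d -> Prop) (w : R) : Prop :=
  exists K, convex_body K /\ ~ contains_R_unimodular_copy K X /\ lattice_width K w.

(* sup A <= sup B in [0, +oo], with sup of the empty set = 0:
   every a in A is <= sup B in [0,+oo]. *)
Definition esup_le (A B : R -> Prop) : Prop :=
  forall a, A a -> forall c, c < a -> c < 0 \/ exists b, B b /\ c < b.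

Definition minkowski_cube {d : nat} (X : vec d -> Prop) : vec d -> Prop :=
  fun z => exists x y, X x /\ (forall i, 0 <= y i <= 1) /\ (forall i, z i = x i + y i).

(* Rounding up the real translation vector: if [K] contains [A (X + [0,1]^d) + b] with
   [A] in GL(d,Z), choose [z] in Z^d with [v := z - A^-1 b] in [0,1]^d.  Then
   [A (x + v) + b = A x + A z], so [K] contains the unimodular copy [A X + A z] of [X].
   Hence every width attained in the definition of Flt_d(X) is attained in that of
   Flt^R_d(X + [0,1]^d). *)
From Stdlib Require Import Reals ZArith Lra FunctionalExtensionality.
From Stdlib Require Vectors.Fin.
Open Scope R_scope.

Lemma fsum_ext d (f g : Fin.t d -> R) : (forall i, f i = g i) -> fsum d f = fsum d g.
Proof.
  induction d as [|d IHd]; simpl; intros H; auto.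
  rewrite H, (IHd (fun i => f (Fin.FS i)) (fun i => g (Fin.FS i))); auto.
Qed.

Lemma fsum_add d (f g : Fin.t d -> R) :
  fsum d (fun i => f i + g i) = fsum d f + fsum d g.
Proof.
  induction d as [|d IHd]; simpl; [lra|].
  rewrite (IHd (fun i => f (Fin.FS i)) (fun i => g (Fin.FS i))); lra.
Qed.

Lemma fsum_scal d c (f : Fin.t d -> R) : fsum d (fun i => c * f i) = c * fsum d f.
Proof.
  induction d as [|d IHd]; simpl; [lra|].
  rewrite (IHd (fun i => f (Fin.FS i))); lra.
Qed.

Lemma fsum_zero d : fsum d (fun _ => 0) = 0.
Proof. induction d as [|d IHd]; simpl; [|rewrite IHd]; lra. Qed.

Lemma fsum_swap n m (F : Fin.t n -> Fin.t m -> R) :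
  fsum n (fun j => fsum m (fun k => F j k)) = fsum m (fun k => fsum n (fun j => F j k)).
Proof.
  induction n as [|n IHn]; simpl.
  - now rewrite fsum_zero.
  - now rewrite (IHn (fun j k => F (Fin.FS j) k)), <- fsum_add.
Qed.

Lemma idx_eq_FS d (i j : Fin.t d) : idx_eq (Fin.FS i) (Fin.FS j) = idx_eq i j.
Proof.
  unfold idx_eq.
  destruct (Fin.eq_dec (Fin.FS i) (Fin.FS j)) as [e|ne], (Fin.eq_dec i j) as [e'|ne'];
    auto.
  - apply Fin.FS_inj in e; contradiction.
  - subst; contradiction.
Qed.

Lemma fsum_delta d (i : Fin.t d) (b : Fin.t d -> R) :
  fsum d (fun k => idx_eq i k * b k) = b i.
Proof.
  induction d as [|d IHd]; [inversion i|].
  revert b; apply (Fin.caseS' i); clear i; intros; simpl.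
  - unfold idx_eq at 1; destruct (Fin.eq_dec Fin.F1 Fin.F1) as [_|]; [|congruence].
    rewrite (fsum_ext _ _ (fun _ => 0)), fsum_zero; [lra|].
    intros k; unfold idx_eq.
    destruct (Fin.eq_dec Fin.F1 (Fin.FS k)) as [e|_]; [discriminate e|lra].
  - unfold idx_eq at 1; destruct (Fin.eq_dec (Fin.FS p) Fin.F1) as [e|_];
      [discriminate e|].
    rewrite <- (IHd p (fun k => b (Fin.FS k))).
    rewrite (fsum_ext _ _ (fun k => idx_eq p k * b (Fin.FS k)));
      [lra | intros k; now rewrite idx_eq_FS].
Qed.

Fixpoint zsum (d : nat) : (Fin.t d -> Z) -> Z :=
  match d return (Fin.t d -> Z) -> Z with
  | O => fun _ => 0%Z
  | S n => fun f => (f Fin.F1 + zsum n (fun i => f (Fin.FS i)))%Z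
  end.

Lemma IZR_zsum d f : IZR (zsum d f) = fsum d (fun i => IZR (f i)).
Proof. induction d as [|d IHd]; simpl; auto; now rewrite plus_IZR, IHd. Qed.

Definition mat_apply {d : nat} (A : imat d) (v : vec d) : vec d :=
  fun i => fsum d (fun j => IZR (A i j) * v j).

Definition imat_apply {d : nat} (A : imat d) (z : ivec d) : ivec d :=
  fun i => zsum d (fun j => (A i j * z j)%Z).

Lemma IZR_imat_apply d (A : imat d) z i :
  IZR (imat_apply A z i) = mat_apply A (fun j => IZR (z j)) i.
Proof.
  unfold imat_apply, mat_apply; rewrite IZR_zsum.
  apply fsum_ext; intros; apply mult_IZR.
Qed.

Lemma mat_apply_add d (A : imat d) u v i :
  mat_apply A (fun j => u j + v j) i = mat_apply A u i + mat_apply A v i.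
Proof.
  unfold mat_apply; rewrite <- fsum_add; apply fsum_ext; intros; ring.
Qed.

Lemma mat_apply_inverse d (A B : imat d) :
  (forall i k, fsum d (fun j => IZR (A i j) * IZR (B j k)) = idx_eq i k) ->
  forall v i, mat_apply A (mat_apply B v) i = v i.
Proof.
  intros HAB v i; unfold mat_apply.
  rewrite (fsum_ext _ _ (fun j => fsum d (fun k => IZR (A i j) * IZR (B j k) * v k)))
    by (intros; rewrite <- fsum_scal; apply fsum_ext; intros; ring).
  rewrite fsum_swap, <- (fsum_delta d i v).
  apply fsum_ext; intros k; rewrite <- HAB, Rmult_comm, <- fsum_scal.
  apply fsum_ext; intros; ring.
Qed.

Lemma affine_image_shift d (A : imat d) b y v :
  affine_image A b (fun i => y i + v i) = affine_image A (fun i => mat_apply A v i + b i) y.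
Proof.
  apply functional_extensionality; intros i; unfold affine_image.
  fold (mat_apply A (fun j => y j + v j) i) (mat_apply A y i).
  rewrite mat_apply_add; ring.
Qed.

Lemma contains_unimodular_copy_of_cube {d : nat} (K X : vec d -> Prop) :
  contains_R_unimodular_copy K (minkowski_cube X) -> contains_unimodular_copy K X.
Proof.
  intros [A [b [[B [HAB HBA]] HK]]].
  set (z := fun i => up (mat_apply B b i)).
  set (v := fun i => IZR (z i) - mat_apply B b i).
  exists A, (imat_apply A z); split; [exists B; now split|].
  intros x Hx.
  assert (Hv : forall i, 0 <= v i <= 1)
    by (intros i; unfold v, z; destruct (archimed (mat_apply B b i)); lra).
  assert (Hshift : forall i, IZR (imat_apply A z i) = mat_apply A v i + b i).
  { intros i; rewrite IZR_imat_apply.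
    rewrite <- (mat_apply_inverse d A B HAB b i), <- mat_apply_add.
    unfold mat_apply at 1 2; apply fsum_ext; intros; unfold v; ring. }
  replace (affine_image A (fun i => IZR (imat_apply A z i)) x)
    with (affine_image A b (fun i => x i + v i)).
  - apply HK; exists x, v; auto.
  - rewrite affine_image_shift; f_equal.
    apply functional_extensionality; intros; now rewrite Hshift.
Qed.

Lemma esup_le_subset (A B : R -> Prop) : (forall a, A a -> B a) -> esup_le A B.
Proof. intros HAB a Ha c Hc; right; exists a; auto. Qed.

Theorem mainTheorem8 (d : nat) (X : vec d -> Prop) (hX : bounded_set X) :
  esup_le (Flt_widths d X) (FltR_widths d (minkowski_cube X)).
Proof.
  apply esup_le_subset; intros w [K [HK [Hnc Hw]]].
  exists K; split; [exact HK | split; [|exact Hw]].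
  intros Hcopy; apply Hnc, contains_unimodular_copy_of_cube, Hcopy.
Qed.
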